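(* Let $\alpha\in[0,1)$. The function $g_\alpha$ attains its global maximum on $[0,1]$ at a single point $x_0\in[0,1/2]$, which is characterized as the solution of $G_\alpha(x_0)=x_0+\tfrac12$. Moreover: (1) if $\alpha>0$, $x_0$ is the only critical point of $g_\alpha$ in $[0,1]$; (2) in the two-type setting, if $\phi_i<2\log2$ then for every $p\in[0,1]^2$ with $p_i\le\bar p_i$ one has $f^{(i)}(p)<x_0(\alpha(i))$, where $x_0(\alpha(i))$ is the maximizer of $g_{\alpha(i)}$; in particular $g_{\alpha(i)}'(f^{(i)}(p))\ge0$ for all $p\in[0,\bar p_1]\times[0,\bar p_2]$.
   Context: For $\alpha\in(0,1)$ let $g_\alpha(x)=\frac{(1-\sqrt{1-4(1-\alpha)x(1-x)})^3}{8(1-\alpha)^2x^2}$ for $x\in(0,1]$ and $g_\alpha(0)=0$; let $g_0(x)=x$ for $x\le1/2$ and $g_0(x)=(1-x)^3/x^2$ for $x>1/2$. Let $G_\alpha(x)=\frac{1-\sqrt{1-4(1-\alpha)x(1-x)}}{2(1-\alpha)x}$ (with $G_\alpha(0)=1$), so $g_\alpha(x)=(1-\alpha)xG_\alpha(x)^3$. Two-type setting: $\beta_1,\beta_2>0$, $\alpha(1),\alpha(2)\in[0,1)$, $\phi_i=(1-\alpha(i))\beta_i$; for $p\in[0,1]^2$, $S(p)=\beta_1p_1+\beta_2p_2$ and $f^{(i)}(p)=(1-e^{-S(p)})\beta_ip_i/S(p)$ ($=0$ if $S(p)=0$); $\bar p_i=\sup_{x\in[0,1]}g_{\alpha(i)}(x)$.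 *)

From Stdlib Require Import Reals Lra.
Open Scope R_scope.

Definition Gfun (a x : R) : R :=
  if Req_EM_T x 0 then 1
  else (1 - sqrt (1 - 4 * (1 - a) * x * (1 - x))) / (2 * (1 - a) * x).

Definition gfun (a x : R) : R :=
  if Req_EM_T a 0 then
    (if Rle_dec x (1/2) then x else (1 - x) ^ 3 / x ^ 2)
  else
    (if Req_EM_T x 0 then 0
     else (1 - sqrt (1 - 4 * (1 - a) * x * (1 - x))) ^ 3
          / (8 * (1 - a) ^ 2 * x ^ 2)).

(* Two-type setting: beta, p : nat -> R, only indices 1 and 2 are used. *)
Definition Ssum (beta p : nat -> R) : R := beta 1%nat * p 1%nat + beta 2%nat * p 2%nat.

Definition ffun (beta p : nat -> R) (i : nat) : R :=
  if Req_EM_T (Ssum beta p) 0 then 0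
  else (1 - exp (- Ssum beta p)) * beta i * p i / Ssum beta p.

Definition is_maximizer (a x0 : R) : Prop :=
  0 <= x0 <= 1 /\ forall x, 0 <= x <= 1 -> gfun a x <= gfun a x0.

Definition is_sup_g (a pbar : R) : Prop :=
  is_lub (fun y => exists x, 0 <= x <= 1 /\ y = gfun a x) pbar.

From Stdlib Require Import Reals Lra Psatz.
From Coquelicot Require Import Coquelicot.
Open Scope R_scope.

(* For alpha > 0 put D = 1 - 4(1-alpha)x(1-x) and A = 1 - (1-alpha)x(2x+1).  On (0,1)
   the derivative of g_alpha is a positive multiple of N = A - sqrt D, and
   N (A + sqrt D) = 4(1-alpha) x P with P = (1-alpha) x (x+1/2)^2 - 2x + 1/2.  P decreases
   strictly on [0,1/2] from 1/2 to -alpha/2 and N < 0 beyond 1/2, so N has a single zero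
   x0 in (0,1/2), where g_alpha turns from increasing to decreasing; N = 0 is the equation
   G_alpha(x) = x + 1/2.  For alpha = 0 the maximizer is 1/2.  Since g = (1-alpha) x G^3,
   the maximum is (1-alpha) x0 (x0+1/2)^3.
   For (2), concavity of 1 - e^-t gives f_i(p) <= 1 - e^(-beta_i p_i), and
   beta_i p_i <= phi_i x0 (x0+1/2)^3 < 2 ln 2 x0 (x0+1/2)^3, while
   1 - exp(-2 ln 2 x (x+1/2)^3) <= x on (0,1/2]. *)

Lemma lt_of_derive_pos (f f' : R -> R) x y :
  x < y -> (forall c, x <= c <= y -> derivable_pt_lim f c (f' c)) ->
  (forall c, x < c < y -> 0 < f' c) -> f x < f y.
Proof.
intros Hxy Hd Hpos.
destruct (MVT_cor2 f f' x y Hxy Hd) as [c [E Hc]].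
specialize (Hpos c Hc). nra.
Qed.

Lemma gt_of_derive_neg (f f' : R -> R) x y :
  x < y -> (forall c, x <= c <= y -> derivable_pt_lim f c (f' c)) ->
  (forall c, x < c < y -> f' c < 0) -> f y < f x.
Proof.
intros Hxy Hd Hneg.
enough (- f x < - f y) by lra.
apply (lt_of_derive_pos (fun t => - f t) (fun t => - f' t)); auto.
- intros c Hc. now apply derivable_pt_lim_opp, Hd.
- intros c Hc. specialize (Hneg c Hc). lra.
Qed.

Lemma lt_unimodal_peak (f : R -> R) l m r x :
  (forall x y, l <= x < y -> y <= m -> f x < f y) ->
  (forall x y, m <= x < y -> y <= r -> f y < f x) ->
  l <= x <= r -> x <> m -> f x < f m.
Proof.
intros Hinc Hdec Hx Hxm.
destruct (Rtotal_order x m) as [Hlt | [Heq | Hgt]].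
- apply Hinc; lra.
- contradiction.
- apply Hdec; lra.
Qed.

Record g_peak (a x0 : R) : Prop := {
  peak_range : 0 <= x0 <= 1/2;
  peak_maximizer : is_maximizer a x0;
  peak_maximizer_unique : forall x, 0 <= x <= 1 -> gfun a x = gfun a x0 -> x = x0;
  peak_Gfun : Gfun a x0 = x0 + 1/2;
  peak_Gfun_unique : forall x, 0 <= x <= 1 -> Gfun a x = x + 1/2 -> x = x0;
  peak_critical_unique :
    0 < a -> forall x, 0 < x < 1 -> derivable_pt_lim (gfun a) x 0 -> x = x0;
  peak_increasing :
    forall x, 0 <= x < x0 -> exists l, derivable_pt_lim (gfun a) x l /\ 0 <= l
}.

Lemma gfun_alpha0 x : gfun 0 x = if Rle_dec x (1/2) then x else (1 - x) ^ 3 / x ^ 2.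
Proof. unfold gfun. destruct (Req_EM_T 0 0); [reflexivity | contradiction]. Qed.

Lemma Gfun_alpha0 x : 0 <= x -> Gfun 0 x = if Rle_dec x (1/2) then 1 else (1 - x) / x.
Proof.
intros Hx. unfold Gfun.
destruct (Req_EM_T x 0) as [-> | Hx0]; destruct (Rle_dec _ (1/2)); try lra.
- replace (1 - 4 * (1 - 0) * x * (1 - x)) with ((1 - 2 * x) ^ 2) by ring.
  rewrite sqrt_pow2 by lra. field. lra.
- replace (1 - 4 * (1 - 0) * x * (1 - x)) with ((2 * x - 1) ^ 2) by ring.
  rewrite sqrt_pow2 by lra. field. lra.
Qed.

Lemma gfun_alpha0_lt_half x : 1/2 < x <= 1 -> (1 - x) ^ 3 / x ^ 2 < 1/2.
Proof.
intros Hx. apply Rmult_lt_reg_r with (x ^ 2); [apply pow_lt; lra |].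
unfold Rdiv. rewrite Rmult_assoc, Rinv_l, Rmult_1_r by (apply pow_nonzero; lra).
assert (0 <= (1 - x) ^ 2) by apply pow2_ge_0.
assert ((1 - x) * (1 - x) ^ 2 <= 1/2 * (1 - x) ^ 2) by (apply Rmult_le_compat_r; lra).
nra.
Qed.

Lemma g_peak_alpha0 : g_peak 0 (1/2).
Proof.
assert (Hhalf : gfun 0 (1/2) = 1/2).
{ rewrite gfun_alpha0. destruct (Rle_dec (1/2) (1/2)); [reflexivity | lra]. }
assert (Hlt : forall x, 0 <= x <= 1 -> x <> 1/2 -> gfun 0 x < 1/2).
{ intros x Hx Hne. rewrite gfun_alpha0. destruct (Rle_dec x (1/2)); [lra |].
  apply gfun_alpha0_lt_half. lra. }
split.
- lra.
- split; [lra |]. intros x Hx. rewrite Hhalf.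
  destruct (Req_dec x (1/2)) as [-> | Hne]; [lra |]. left. now apply Hlt.
- intros x Hx E. rewrite Hhalf in E.
  destruct (Req_dec x (1/2)) as [-> | Hne]; [reflexivity |].
  specialize (Hlt x Hx Hne). lra.
- rewrite Gfun_alpha0 by lra. destruct (Rle_dec (1/2) (1/2)); lra.
- intros x Hx E. rewrite Gfun_alpha0 in E by lra.
  destruct (Rle_dec x (1/2)); [lra |].
  apply (f_equal (fun t => t * x)) in E. field_simplify in E; [nra | lra].
- lra.
- intros x Hx. exists 1. split; [| lra].
  apply is_derive_Reals, is_derive_ext_loc with (f := fun t => t); [| auto_derive; auto].
  exists (mkposreal (1/2 - x) ltac:(lra)). intros t Ht.
  apply Rabs_lt_between' in Ht. rewrite gfun_alpha0.
  destruct (Rle_dec t (1/2)); [reflexivity | simpl in Ht; lra].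
Qed.

Section PositiveAlpha.

Variable a : R.
Hypothesis Ha : 0 < a < 1.

Definition disc (x : R) : R := 1 - 4 * (1 - a) * x * (1 - x).

Lemma disc_gt0 x : 0 < disc x.
Proof.
assert (E : disc x = a + (1 - a) * (2 * x - 1) ^ 2) by (unfold disc; ring).
assert (0 <= (1 - a) * (2 * x - 1) ^ 2) by (apply Rmult_le_pos; [lra | apply pow2_ge_0]).
lra.
Qed.

Lemma sqrt_disc_gt0 x : 0 < sqrt (disc x).
Proof. apply sqrt_lt_R0, disc_gt0. Qed.

Lemma sqrt_disc_sq x : sqrt (disc x) ^ 2 = disc x.
Proof. rewrite <- Rsqr_pow2. apply Rsqr_sqrt. left. apply disc_gt0. Qed.

Lemma sqrt_disc_lt1 x : 0 < x < 1 -> sqrt (disc x) < 1.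
Proof.
intros Hx. rewrite <- sqrt_1. apply sqrt_lt_1_alt. split; [left; apply disc_gt0 |].
unfold disc. assert (0 < (1 - a) * x * (1 - x)) by (apply Rmult_lt_0_compat; nra). lra.
Qed.

Lemma gfun_nz x : x <> 0 -> gfun a x = (1 - sqrt (disc x)) ^ 3 / (8 * (1 - a) ^ 2 * x ^ 2).
Proof.
intros Hx. unfold gfun. destruct (Req_EM_T a 0); [lra |].
destruct (Req_EM_T x 0); [contradiction | reflexivity].
Qed.

Lemma Gfun_nz x : x <> 0 -> Gfun a x = (1 - sqrt (disc x)) / (2 * (1 - a) * x).
Proof. intros Hx. unfold Gfun. destruct (Req_EM_T x 0); [contradiction | reflexivity]. Qed.

Lemma gfun_Gfun_pos x : gfun a x = (1 - a) * x * Gfun a x ^ 3.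
Proof.
destruct (Req_dec x 0) as [-> | Hx].
- unfold gfun. destruct (Req_EM_T a 0); [lra |]. destruct (Req_EM_T 0 0); [ring | contradiction].
- rewrite gfun_nz, Gfun_nz by exact Hx. field. lra.
Qed.

Lemma Gfun_rationalized x : Gfun a x = 2 * (1 - x) / (1 + sqrt (disc x)).
Proof.
pose proof (sqrt_disc_gt0 x) as Hs0. pose proof (sqrt_disc_sq x) as Hs.
destruct (Req_dec x 0) as [-> | Hx].
- unfold Gfun. destruct (Req_EM_T 0 0); [| contradiction].
  unfold disc. replace (1 - 4 * (1 - a) * 0 * (1 - 0)) with 1 by ring.
  rewrite sqrt_1. field.
- rewrite Gfun_nz by exact Hx. unfold disc in *.
  set (s := sqrt _) in *. clearbody s. field [Hs]. lra.
Qed.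

Definition dgfun_num (x : R) : R := 1 - (1 - a) * x * (2 * x + 1) - sqrt (disc x).

Definition dgfun_coef (x : R) : R :=
  (1 - sqrt (disc x)) ^ 2 / (4 * (1 - a) ^ 2 * x ^ 3 * sqrt (disc x)).

Definition dgfun (x : R) : R := if Req_EM_T x 0 then 1 - a else dgfun_coef x * dgfun_num x.

Lemma dgfun_coef_gt0 x : 0 < x < 1 -> 0 < dgfun_coef x.
Proof.
intros Hx. pose proof (sqrt_disc_gt0 x). pose proof (sqrt_disc_lt1 x Hx).
unfold dgfun_coef. apply Rdiv_lt_0_compat; [apply pow_lt; lra |].
repeat apply Rmult_lt_0_compat; try lra; apply pow_lt; lra.
Qed.

Lemma derivable_pt_lim_gfun x : derivable_pt_lim (gfun a) x (dgfun x).
Proof.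
apply is_derive_Reals. unfold dgfun. destruct (Req_EM_T x 0) as [-> | Hx].
- apply is_derive_ext with (f := fun t => (1 - a) * t * (2 * (1 - t) / (1 + sqrt (disc t))) ^ 3).
  { intros t. now rewrite gfun_Gfun_pos, Gfun_rationalized. }
  unfold disc. auto_derive.
  + replace (1 + - (4 * (1 - a) * 0 * (1 + - 0))) with 1 by ring. rewrite sqrt_1. lra.
  + replace (1 + - (4 * (1 - a) * 0 * (1 + - 0))) with 1 by ring. rewrite sqrt_1. field.
- apply is_derive_ext_loc
    with (f := fun t => (1 - sqrt (disc t)) ^ 3 / (8 * (1 - a) ^ 2 * t ^ 2)).
  { exists (mkposreal (Rabs x) (Rabs_pos_lt x Hx)). intros t Ht.
    symmetry. apply gfun_nz. intros ->.
    unfold ball in Ht; simpl in Ht. unfold AbsRing_ball, abs, minus, plus, opp in Ht; simpl in Ht.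
    rewrite Rplus_0_l, Rabs_Ropp in Ht. lra. }
  pose proof (sqrt_disc_gt0 x) as Hs0. pose proof (sqrt_disc_sq x) as Hs.
  pose proof (disc_gt0 x). unfold dgfun_coef, dgfun_num, disc in *. auto_derive.
  + pose proof (Rsqr_pos_lt x Hx). unfold Rsqr in *.
    split; [lra | split; [| exact I]]. apply Rgt_not_eq.
    rewrite !Rmult_1_r. apply Rmult_lt_0_compat; nra.
  + replace (1 + - (4 * (1 - a) * x * (1 + - x))) with (1 - 4 * (1 - a) * x * (1 - x)) by ring.
    set (s := sqrt _) in *. clearbody s. field [Hs]. lra.
Qed.

Definition crit_poly (x : R) : R := (1 - a) * x * (x + 1/2) ^ 2 - 2 * x + 1/2.

Lemma crit_poly_decreasing x y : 0 <= x < y -> y <= 1/2 -> crit_poly y < crit_poly x.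
Proof.
intros Hxy Hy. unfold crit_poly.
assert (E : y * (y + 1/2) ^ 2 - x * (x + 1/2) ^ 2
            = (y - x) * (y * y + x * y + x * x + x + y + 1/4)) by field.
assert (Hq : 0 <= y * y + x * y + x * x + x + y + 1/4 <= 2) by nra.
assert ((1 - a) * ((y - x) * (y * y + x * y + x * x + x + y + 1/4)) <= (1 - a) * ((y - x) * 2)).
{ apply Rmult_le_compat_l; [lra |]. apply Rmult_le_compat_l; lra. }
nra.
Qed.

Lemma crit_poly_root : exists x0, 0 < x0 < 1/2 /\ crit_poly x0 = 0.
Proof.
destruct (IVT (fun x => - crit_poly x) 0 (1/2)) as [x0 [Hx0 E]].
- unfold crit_poly. intros x. reg.
- lra.
- unfold crit_poly. lra.
- unfold crit_poly. lra.
- exists x0. split; [| lra].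
  split; destruct (Req_dec x0 0), (Req_dec x0 (1/2)); subst; unfold crit_poly in E; lra.
Qed.

Lemma dgfun_num_mul_conj x :
  dgfun_num x * (1 - (1 - a) * x * (2 * x + 1) + sqrt (disc x)) = 4 * (1 - a) * x * crit_poly x.
Proof.
pose proof (sqrt_disc_sq x) as Hs. unfold dgfun_num, crit_poly, disc in *.
set (s := sqrt _) in *. clearbody s. nra.
Qed.

Lemma dgfun_num_small x : 0 < x <= 1/2 -> exists c, 0 < c /\ dgfun_num x = c * crit_poly x.
Proof.
intros Hx. pose proof (sqrt_disc_gt0 x). pose proof (dgfun_num_mul_conj x) as E.
assert (Hc : 0 < 1 - (1 - a) * x * (2 * x + 1) + sqrt (disc x)) by nra.
exists (4 * (1 - a) * x / (1 - (1 - a) * x * (2 * x + 1) + sqrt (disc x))). split.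
- apply Rdiv_lt_0_compat; [nra | lra].
- apply (Rmult_eq_reg_r (1 - (1 - a) * x * (2 * x + 1) + sqrt (disc x))); [| lra].
  rewrite E. field. lra.
Qed.

Lemma dgfun_num_large x : 1/2 < x -> dgfun_num x < 0.
Proof.
intros Hx.
assert (Hs : 1 - 2 * (1 - a) * x <= sqrt (disc x)).
{ apply Rle_trans with (Rabs (1 - 2 * (1 - a) * x)); [apply Rle_abs |].
  rewrite <- sqrt_Rsqr_abs. apply sqrt_le_1_alt. unfold Rsqr, disc. nra. }
assert (0 < (1 - a) * x * (2 * x - 1)) by (apply Rmult_lt_0_compat; nra).
unfold dgfun_num. nra.
Qed.

Lemma dgfun_num_single_zero :
  exists x0, 0 < x0 < 1/2 /\ dgfun_num x0 = 0 /\
    (forall x, 0 < x < x0 -> 0 < dgfun_num x) /\ (forall x, x0 < x -> dgfun_num x < 0).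
Proof.
destruct crit_poly_root as [x0 [Hx0 HP]].
exists x0. split; [exact Hx0 |]. split; [| split].
- destruct (dgfun_num_small x0) as [c [_ ->]]; [lra |]. rewrite HP. ring.
- intros x Hx. destruct (dgfun_num_small x) as [c [Hc ->]]; [lra |].
  pose proof (crit_poly_decreasing x x0). nra.
- intros x Hx. destruct (Rle_or_lt x (1/2)).
  + destruct (dgfun_num_small x) as [c [Hc ->]]; [lra |].
    pose proof (crit_poly_decreasing x0 x). nra.
  + now apply dgfun_num_large.
Qed.

Lemma Gfun_eq_add_half_iff x : x <> 0 -> Gfun a x = x + 1/2 <-> dgfun_num x = 0.
Proof.
intros Hx. rewrite Gfun_nz by exact Hx. unfold dgfun_num.
assert (2 * (1 - a) * x <> 0) by (apply Rmult_integral_contrapositive; split; lra).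
split; intros E.
- apply (f_equal (fun t => t * (2 * (1 - a) * x))) in E.
  field_simplify in E; [| lra]. nra.
- apply (Rmult_eq_reg_r (2 * (1 - a) * x)); [| exact H]. field_simplify; [nra | lra].
Qed.

Lemma g_peak_alpha_pos : exists x0, g_peak a x0.
Proof.
destruct dgfun_num_single_zero as [x0 [Hx0 [Hzero [Hpos Hneg]]]].
assert (Hdg : forall c, 0 < c < 1 -> dgfun c = dgfun_coef c * dgfun_num c).
{ intros c Hc. unfold dgfun. destruct (Req_EM_T c 0); [lra | reflexivity]. }
assert (Hinc : forall x y, 0 <= x < y -> y <= x0 -> gfun a x < gfun a y).
{ intros x y Hxy Hy. apply (lt_of_derive_pos _ dgfun); [lra | intros; apply derivable_pt_lim_gfun |].
  intros c Hc. rewrite Hdg by lra.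
  apply Rmult_lt_0_compat; [apply dgfun_coef_gt0 | apply Hpos]; lra. }
assert (Hdec : forall x y, x0 <= x < y -> y <= 1 -> gfun a y < gfun a x).
{ intros x y Hxy Hy. apply (gt_of_derive_neg _ dgfun); [lra | intros; apply derivable_pt_lim_gfun |].
  intros c Hc. rewrite Hdg by lra.
  pose proof (dgfun_coef_gt0 c ltac:(lra)). pose proof (Hneg c ltac:(lra)). nra. }
assert (Hmax : forall x, 0 <= x <= 1 -> x <> x0 -> gfun a x < gfun a x0)
  by (intros; eapply lt_unimodal_peak; eauto).
assert (Hzero_unique : forall x, 0 < x -> dgfun_num x = 0 -> x = x0).
{ intros x Hx E. destruct (Rtotal_order x x0) as [L | [L | L]]; auto.
  - specialize (Hpos x ltac:(lra)). lra.
  - specialize (Hneg x L). lra. }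
exists x0. split.
- lra.
- split; [lra |]. intros x Hx.
  destruct (Req_dec x x0) as [-> | Hne]; [lra | left; auto].
- intros x Hx E. destruct (Req_dec x x0) as [| Hne]; [assumption |].
  specialize (Hmax x Hx Hne). lra.
- apply Gfun_eq_add_half_iff; [lra | exact Hzero].
- intros x Hx E. destruct (Req_dec x 0) as [-> | Hx0'].
  + unfold Gfun in E. destruct (Req_EM_T 0 0); lra.
  + apply Hzero_unique; [lra |]. now apply Gfun_eq_add_half_iff.
- intros _ x Hx Hcrit. apply Hzero_unique; [lra |].
  pose proof (uniqueness_limite _ _ _ _ Hcrit (derivable_pt_lim_gfun x)) as E.
  rewrite Hdg in E by lra. pose proof (dgfun_coef_gt0 x Hx). nra.
- intros x Hx. exists (dgfun x). split; [apply derivable_pt_lim_gfun |].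
  unfold dgfun. destruct (Req_EM_T x 0); [lra |].
  left. apply Rmult_lt_0_compat; [apply dgfun_coef_gt0 | apply Hpos]; lra.
Qed.

End PositiveAlpha.

Lemma g_peak_exists a : 0 <= a < 1 -> exists x0, g_peak a x0.
Proof.
intros Ha. destruct (Req_dec a 0) as [-> | Ha0].
- exists (1/2). exact g_peak_alpha0.
- apply g_peak_alpha_pos. lra.
Qed.

Lemma gfun_Gfun a x : 0 <= a < 1 -> 0 <= x -> gfun a x = (1 - a) * x * Gfun a x ^ 3.
Proof.
intros Ha Hx. destruct (Req_dec a 0) as [-> | Ha0]; [| apply gfun_Gfun_pos; lra].
rewrite gfun_alpha0, Gfun_alpha0 by exact Hx.
destruct (Rle_dec x (1/2)); [ring | field; lra].
Qed.

Lemma g_peak_gt0 a x0 : g_peak a x0 -> 0 < x0.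
Proof.
intros P. destruct (Req_dec x0 0) as [E | E]; [| pose proof (peak_range _ _ P); lra].
pose proof (peak_Gfun _ _ P) as HG. rewrite E in HG |- *.
unfold Gfun in HG. destruct (Req_EM_T 0 0); lra.
Qed.

Lemma g_peak_value a x0 : 0 <= a < 1 -> g_peak a x0 ->
  gfun a x0 = (1 - a) * x0 * (x0 + 1/2) ^ 3.
Proof.
intros Ha P. rewrite gfun_Gfun, (peak_Gfun _ _ P); [reflexivity | exact Ha |].
apply (peak_range _ _ P).
Qed.

Lemma is_maximizer_g_peak a x0 y : g_peak a x0 -> is_maximizer a y -> y = x0.
Proof.
intros P [Hy Hmy]. destruct (peak_maximizer _ _ P) as [Hx0 Hmx].
apply (peak_maximizer_unique _ _ P y Hy).
specialize (Hmx y Hy). specialize (Hmy x0 Hx0). lra.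
Qed.

Lemma is_sup_g_peak a x0 pbar : g_peak a x0 -> is_sup_g a pbar -> pbar = gfun a x0.
Proof.
intros P Hs. destruct (peak_maximizer _ _ P) as [Hx0 Hmx].
apply (is_lub_u _ _ _ Hs). split.
- intros y [x [Hx ->]]. now apply Hmx.
- intros b Hb. apply Hb. now exists x0.
Qed.

Lemma ln2_bounds : 3/5 < ln 2 < 1.
Proof.
split.
- apply exp_lt_inv. rewrite exp_ln by lra.
  assert (E : exp (3/5) = exp (1/5) * exp (1/5) * exp (1/5))
    by (rewrite <- !exp_plus; f_equal; field).
  assert (Einv : exp (1/5) * exp (- (1/5)) = 1)
    by (rewrite <- exp_plus, Rplus_opp_r; apply exp_0).
  pose proof (exp_ineq1_le (- (1/5))). pose proof (exp_pos (1/5)).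
  assert (exp (1/5) <= 5/4) by nra.
  rewrite E. nra.
- rewrite <- (ln_exp 1). apply ln_increasing; [lra |]. pose proof (exp_ineq1 1). lra.
Qed.

(* Equality holds at x = 1/2, which is where the threshold 2 ln 2 comes from. *)
Lemma one_sub_exp_ln2_le x : 0 < x <= 1/2 -> 1 - exp (- (2 * ln 2) * (x * (x + 1/2) ^ 3)) <= x.
Proof.
intros Hx. destruct ln2_bounds as [L1 L2]. set (L := ln 2) in *.
destruct (Rle_or_lt x (29/100)).
- pose proof (exp_ineq1_le (- (2 * L) * (x * (x + 1/2) ^ 3))).
  assert ((x + 1/2) ^ 3 <= (79/100) ^ 3) by (apply pow_incr; lra).
  assert (0 <= (x + 1/2) ^ 3) by (apply pow_le; lra).
  assert (2 * L * (x + 1/2) ^ 3 <= 1) by nra. nra.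
- assert (E : - (2 * L) * (x * (x + 1/2) ^ 3) = - L + L * (1 - 2 * (x * (x + 1/2) ^ 3)))
    by ring.
  rewrite E, exp_plus, exp_Ropp. unfold L. rewrite exp_ln by lra. fold L.
  pose proof (exp_ineq1_le (L * (1 - 2 * (x * (x + 1/2) ^ 3)))).
  assert (F : 1/2 - x * (x + 1/2) ^ 3 = (1/2 - x) * (x ^ 3 + 2 * x ^ 2 + 7/4 * x + 1))
    by field.
  assert (5/3 <= x ^ 3 + 2 * x ^ 2 + 7/4 * x + 1) by nra.
  assert (1/2 - x <= L * (1/2 - x * (x + 1/2) ^ 3)).
  { rewrite F. assert (0 <= (1/2 - x) * (x ^ 3 + 2 * x ^ 2 + 7/4 * x + 1)) by nra. nra. }
  lra.
Qed.

Lemma one_sub_exp_chord t S : 0 <= t <= S -> 0 < S -> (1 - exp (- S)) * t / S <= 1 - exp (- t).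
Proof.
intros Ht HS.
assert (Et : exp (- t) * exp t = 1) by (rewrite <- exp_plus, Rplus_opp_l; apply exp_0).
assert (A1 : exp (- t) * (1 + t) <= 1).
{ pose proof (exp_ineq1_le t). pose proof (exp_pos (- t)). nra. }
assert (A2 : exp (- t) * (1 + (t - S)) <= exp (- S)).
{ replace (- S) with (- t + (t - S)) by ring. rewrite exp_plus.
  pose proof (exp_ineq1_le (t - S)). pose proof (exp_pos (- t)). nra. }
apply Rmult_le_reg_r with S; [exact HS |].
unfold Rdiv. rewrite Rmult_assoc, Rinv_l, Rmult_1_r by lra.
assert ((S - t) * (exp (- t) * (1 + t)) <= S - t) by nra.
assert (t * (exp (- t) * (1 + (t - S))) <= t * exp (- S)) by nra.
nra.
Qed.

Lemma ffun_le_one_sub_exp beta p i :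
  0 <= beta i * p i <= Ssum beta p -> ffun beta p i <= 1 - exp (- (beta i * p i)).
Proof.
intros Ht. unfold ffun. destruct (Req_EM_T (Ssum beta p) 0) as [E | E].
- replace (beta i * p i) with 0 by lra. rewrite Ropp_0, exp_0. lra.
- rewrite Rmult_assoc. apply one_sub_exp_chord; lra.
Qed.

Lemma ffun_ge0 beta p i : 0 <= beta i * p i <= Ssum beta p -> 0 <= ffun beta p i.
Proof.
intros Ht. unfold ffun. destruct (Req_EM_T (Ssum beta p) 0) as [E | E]; [lra |].
assert (exp (- Ssum beta p) < 1) by (rewrite <- exp_0; apply exp_increasing; lra).
rewrite Rmult_assoc. apply Rdiv_le_0_compat; [apply Rmult_le_pos |]; lra.
Qed.

Lemma ffun_lt_maximizer a beta p i pbar x0 :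
  0 <= a < 1 -> 0 < beta i -> (1 - a) * beta i < 2 * ln 2 ->
  is_sup_g a pbar -> is_maximizer a x0 ->
  0 <= p i <= pbar -> beta i * p i <= Ssum beta p -> ffun beta p i < x0.
Proof.
intros Ha Hb Hphi Hs Hm Hp HS.
destruct (g_peak_exists a Ha) as [y P].
rewrite (is_maximizer_g_peak _ _ _ P Hm).
rewrite (is_sup_g_peak _ _ _ P Hs), (g_peak_value _ _ Ha P) in Hp.
pose proof (g_peak_gt0 _ _ P). pose proof (peak_range _ _ P).
assert (Hc : 0 < y * (y + 1/2) ^ 3) by (apply Rmult_lt_0_compat; [| apply pow_lt]; lra).
assert (Ht : beta i * p i < 2 * ln 2 * (y * (y + 1/2) ^ 3)).
{ apply Rle_lt_trans with ((1 - a) * beta i * (y * (y + 1/2) ^ 3)).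
  - assert (beta i * p i <= beta i * ((1 - a) * y * (y + 1/2) ^ 3))
      by (apply Rmult_le_compat_l; lra). nra.
  - apply Rmult_lt_compat_r; assumption. }
assert (exp (- (2 * ln 2) * (y * (y + 1/2) ^ 3)) < exp (- (beta i * p i)))
  by (apply exp_increasing; lra).
pose proof (ffun_le_one_sub_exp beta p i ltac:(nra)).
pose proof (one_sub_exp_ln2_le y ltac:(lra)).
lra.
Qed.

Theorem mainTheorem14 :
  (forall a : R, 0 <= a < 1 ->
     exists x0 : R,
       0 <= x0 <= 1/2 /\
       is_maximizer a x0 /\
       (forall x, 0 <= x <= 1 -> gfun a x = gfun a x0 -> x = x0) /\
       Gfun a x0 = x0 + 1/2 /\
       (forall x, 0 <= x <= 1 -> Gfun a x = x + 1/2 -> x = x0) /\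
       (0 < a -> forall x, 0 < x < 1 -> derivable_pt_lim (gfun a) x 0 -> x = x0))
  /\
  (forall (beta alpha : nat -> R) (i : nat),
     0 < beta 1%nat -> 0 < beta 2%nat ->
     0 <= alpha 1%nat < 1 -> 0 <= alpha 2%nat < 1 ->
     (i = 1%nat \/ i = 2%nat) ->
     (1 - alpha i) * beta i < 2 * ln 2 ->
     forall pbar1 pbar2 x0 : R,
       is_sup_g (alpha 1%nat) pbar1 ->
       is_sup_g (alpha 2%nat) pbar2 ->
       is_maximizer (alpha i) x0 ->
       (forall p : nat -> R,
          0 <= p 1%nat <= 1 -> 0 <= p 2%nat <= 1 ->
          p i <= (if Nat.eqb i 1 then pbar1 else pbar2) ->
          ffun beta p i < x0) /\
       (forall p : nat -> R,
          0 <= p 1%nat <= pbar1 -> 0 <= p 2%nat <= pbar2 ->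
          exists l, derivable_pt_lim (gfun (alpha i)) (ffun beta p i) l /\ 0 <= l)).
Proof.
split.
- intros a Ha. destruct (g_peak_exists a Ha) as [x0 []]. exists x0. tauto.
- intros beta alpha i Hb1 Hb2 Ha1 Ha2 Hi Hphi pbar1 pbar2 x0 Hs1 Hs2 Hm.
  set (pbar := if Nat.eqb i 1 then pbar1 else pbar2).
  assert (Hi' : 0 <= alpha i < 1 /\ 0 < beta i /\ is_sup_g (alpha i) pbar /\
    forall p : nat -> R, 0 <= p 1%nat -> 0 <= p 2%nat -> 0 <= beta i * p i <= Ssum beta p).
  { unfold pbar, Ssum. destruct Hi as [-> | ->]; simpl;
    (split; [auto | split; [auto | split; [auto | intros p Hp1 Hp2; split; nra]]]). }
  destruct Hi' as [Ha [Hb [Hs HS]]].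
  assert (Hlt : forall p : nat -> R, 0 <= p 1%nat -> 0 <= p 2%nat -> 0 <= p i <= pbar ->
                ffun beta p i < x0)
    by (intros p Hp1 Hp2 Hp; apply (ffun_lt_maximizer (alpha i) beta p i pbar); auto;
        apply HS; assumption).
  split.
  + intros p Hp1 Hp2 Hp. apply Hlt; try lra. split; [| exact Hp].
    destruct Hi as [-> | ->]; lra.
  + intros p Hp1 Hp2. destruct (g_peak_exists (alpha i) Ha) as [y P].
    rewrite (is_maximizer_g_peak _ _ _ P Hm) in Hlt.
    apply (peak_increasing _ _ P). split.
    * apply ffun_ge0, HS; lra.
    * apply Hlt; try lra. unfold pbar. destruct Hi as [-> | ->]; simpl; lra.
Qed.
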